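(* Let $G=(V,A)$, $\mathfrak n=\mathfrak n(G)$ and $\delta$ be as below, with $\delta(e_i)=\sum_{\alpha\in A}\lambda_{i,\alpha}e_i\wedge\alpha+\omega_i$. Let $e_{i_0}\in V$ and $\alpha\in A$. Suppose there are vertices $e_{i_0},e_{i_1},\dots,e_{i_{N-1}}$ and edges $\beta_0,\dots,\beta_{N-1}$ such that $\beta_k$ joins $e_{i_k}$ and $e_{i_{k+1}}$ (indices mod $N$, so $\beta_{N-1}$ joins $e_{i_{N-1}}$ and $e_{i_0}$) and $\beta_k\ne\alpha$ for all $k$. Then $\lambda_{i_0,\alpha}=(-1)^N\lambda_{i_0,\alpha}$; in particular, if $N$ is odd then $\lambda_{i_0,\alpha}=0$.
   Context: $G=(V,A)$ is a finite simple graph without loops and without isolated vertices, $V=\{e_1,\dots,e_n\}$ ordered, each edge joining $e_i,e_j$ ($i<j$) oriented from $e_i$ to $e_j$. $\mathfrak n(G)$ over a field of characteristic zero has basis $V\cup A$, $[e_i,e_j]=\alpha$ if $\alpha$ goes from $e_i$ to $e_j$, $[e_i,e_j]=0$ if not adjacent, edges central; $\mathfrak z=\mathrm{span}(A)$. $\delta$ is a Lie bialgebra structure on $\mathfrak n$ (linear $\delta:\mathfrak n\to\Lambda^2\mathfrak n$ satisfying co-Jacobi and $\delta[x,y]=[\delta x,y]+[x,\delta y]$) with $\delta(\mathfrak z)=0$, such that for every vertex $e_i$ one has $\delta(e_i)=\sum_{\alpha\in A}\lambda_{i,\alpha}e_i\wedge\alpha+\omega_i$ with scalars $\lambda_{i,\alpha}$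 and $\omega_i\in\Lambda^2\mathfrak z$. *)

From HB Require Import structures.
From mathcomp Require Import all_boot all_order all_algebra.
Set Implicit Arguments. Unset Strict Implicit. Unset Printing Implicit Defensive.
Import GRing.Theory.
Local Open Scope ring_scope.

(* Graph on vertices 'I_n given by a relation adj; an edge is a pair (i,j)
   with i < j and adj i j, oriented from e_i to e_j. *)
Definition edge (n : nat) (adj : rel 'I_n) : Type :=
  {p : 'I_n * 'I_n | (p.1 < p.2)%N && adj p.1 p.2}.
HB.instance Definition _ n adj := Finite.on (@edge n adj).

Definition src n adj (a : @edge n adj) : 'I_n := (val a).1.
Definition tgt n adj (a : @edge n adj) : 'I_n := (val a).2.

Definition basis (n : nat) (adj : rel 'I_n) : Type := ('I_n + @edge n adj)%type.
HB.instance Definition _ n adj := Finite.on (@basis n adj).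

Section LieN.
Variables (F : fieldType) (n : nat) (adj : rel 'I_n).
Local Notation B := (@basis n adj).

(* elements of n(G): coordinate functions on the (finite) basis *)
Definition vec := B -> F.
(* elements of n ⊗ n; Λ²n is the subspace of antisymmetric tensors,
   u ∧ v identified with u ⊗ v - v ⊗ u *)
Definition tens2 := B -> B -> F.

Definition bvec (b : B) : vec := fun b' => (b' == b)%:R.
Definition vadd (x y : vec) : vec := fun b => x b + y b.
Definition vscale (c : F) (x : vec) : vec := fun b => c * x b.

Definition wedge (u v : vec) : tens2 := fun b c => u b * v c - u c * v b.

(* Lie bracket of n(G): [e_i,e_j] = alpha if alpha goes from e_i to e_j,
   0 if not adjacent; edges central. *)
Definition br (x y : vec) : vec := fun b =>
  match b with
  | inl _ => 0
  | inr a => x (inl (src a)) * y (inl (tgt a)) - x (inl (tgt a)) * y (inl (src a))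
  end.

(* adjoint action x . t = (ad_x ⊗ 1 + 1 ⊗ ad_x) t, i.e. [x, u∧v] = [x,u]∧v + u∧[x,v] *)
Definition act (x : vec) (t : tens2) : tens2 := fun b c =>
  \sum_(d : B) t d c * br x (bvec d) b + \sum_(d : B) t b d * br x (bvec d) c.

(* Cycl ∘ (δ ⊗ id) ∘ δ applied to x, as a 3-tensor *)
Definition dd (delta : vec -> tens2) (x : vec) (b c d : B) : F :=
  \sum_(e : B) delta x e d * delta (bvec e) b c.
Definition cojac (delta : vec -> tens2) (x : vec) (b c d : B) : F :=
  dd delta x b c d + dd delta x c d b + dd delta x d b c.

Definition is_lie_bialgebra (delta : vec -> tens2) : Prop :=
  [/\ (forall (k : F) (x y : vec) b c,
         delta (vadd (vscale k x) y) b c = k * delta x b c + delta y b c),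
      (forall x b c, delta x b c = - delta x c b),
      (forall x b c d, cojac delta x b c d = 0) &
      (forall x y b c,
         delta (br x y) b c = act x (delta y) b c - act y (delta x) b c)].

End LieN.

(* If an edge beta goes from e_i to e_j, then [e_i, e_j] = beta is central, so
   delta beta = 0 and the cocycle condition gives 0 = [e_i, delta e_j] - [e_j, delta e_i].
   For an edge gamma <> beta, the beta ^ gamma coefficient of the right-hand side is
   lambda_{j,gamma} + lambda_{i,gamma}, so the two ends of any edge other than gamma
   carry opposite coefficients.  Walking once around the cycle, which avoids alpha,
   flips the sign of lambda_{i0,alpha} exactly N times. *)

From HB Require Import structures.
From mathcomp Require Import all_boot all_order all_algebra ring.
From Stdlib Require Import FunctionalExtensionality.
Import GRing.Theory.
Local Open Scope ring_scope.

Lemma sum_mul_indicator {R : nzSemiRingType} {T : finType} (f : T -> R) (e : T) :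
  \sum_d f d * (e == d)%:R = f e.
Proof.
rewrite (bigD1 e) //= eqxx mulr1 big1 ?addr0 // => d /negbTE ne.
by rewrite eq_sym ne mulr0.
Qed.

Lemma sum_mul_indicatorB {R : comNzRingType} {T : finType} (f : T -> R)
    (e1 e2 : T) (x y : R) :
  \sum_d f d * (x * (e1 == d)%:R - y * (e2 == d)%:R) = x * f e1 - y * f e2.
Proof.
rewrite -(sum_mul_indicator f e1) -(sum_mul_indicator f e2) !mulr_sumr -sumrB.
by apply: eq_bigr => d _; ring.
Qed.

Lemma signr_cycle {R : pzRingType} (N : nat) (u : nat -> R) :
    (forall k, (k < N)%N -> u (k.+1 %% N)%N = - u k) ->
  u 0%N = (-1) ^+ N * u 0%N.
Proof.
move=> u_step; case: N u_step => [|N] u_step; first by rewrite expr0 mul1r.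
suff sign_k k : (k <= N.+1)%N -> u (k %% N.+1)%N = (-1) ^+ k * u 0%N.
  by rewrite -{1}(modnn N.+1) sign_k.
elim: k => [|k IHk] lt_k; first by rewrite mod0n expr0 mul1r.
rewrite u_step // -[in u k](modn_small lt_k) (IHk (ltnW lt_k)).
by rewrite exprS mulN1r mulNr.
Qed.

Lemma eq_oppr_eq0 {F : fieldType} (x : F) : 2%:R != 0 :> F -> x = - x -> x = 0.
Proof.
move=> two_neq0 /eqP; rewrite -addr_eq0 -mulr2n -mulr_natr mulf_eq0.
by rewrite (negbTE two_neq0) orbF => /eqP.
Qed.

Section Graph.
Context {n : nat} {adj : rel 'I_n}.
Implicit Types (a b g : edge adj).

Lemma src_lt_tgt a : (src a < tgt a)%N.
Proof. by case: a => -[i j] ij; rewrite /src /tgt /=; case/andP: ij. Qed.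

Lemma src_neq_tgt a : (src a == tgt a) = false.
Proof. exact: ltn_eqF (src_lt_tgt a). Qed.

Lemma edge_eqE a b : (a == b) = (src a == src b) && (tgt a == tgt b).
Proof.
apply/eqP/andP => [-> // | [/eqP eq_src /eqP eq_tgt]].
apply: val_inj; rewrite /src /tgt in eq_src eq_tgt.
by rewrite [val a]surjective_pairing [val b]surjective_pairing eq_src eq_tgt.
Qed.

Lemma edge_not_reversed a b : ~ (src a = tgt b /\ tgt a = src b).
Proof.
move=> [eq_src eq_tgt]; move: (src_lt_tgt a) (src_lt_tgt b).
by rewrite eq_src eq_tgt => /ltn_trans lt_b /lt_b; rewrite ltnn.
Qed.

Context {F : fieldType}.
Local Notation e i := (bvec F (inl i)).

Lemma br_vertices b : br (e (src b)) (e (tgt b)) = bvec F (inr b).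
Proof.
apply: functional_extensionality => -[//|a] /=.
rewrite /bvec /= !(inj_eq inl_inj) (inj_eq inr_inj) edge_eqE.
have [eq_src|_] := eqVneq (src a) (tgt b); last first.
  by rewrite mulr0 subr0 -natrM mulnb.
have -> : (tgt a == src b) = false.
  by apply/eqP => eq_tgt; apply: (@edge_not_reversed a b).
by rewrite mul0r subr0 -natrM mulnb.
Qed.

Lemma act_vertex_edges (i : 'I_n) (t : tens2 F adj) a b :
  act (e i) t (inr a) (inr b) =
    (src a == i)%:R * t (inl (tgt a)) (inr b) - (tgt a == i)%:R * t (inl (src a)) (inr b)
  + ((src b == i)%:R * t (inr a) (inl (tgt b)) - (tgt b == i)%:R * t (inr a) (inl (src b))).
Proof. by rewrite /act !sum_mul_indicatorB. Qed.

Section Bialgebra.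
Context {delta : vec F adj -> tens2 F adj} {lambda : 'I_n -> edge adj -> F}
  {omega : 'I_n -> tens2 F adj}.
Hypothesis delta_br : forall x y (s t : basis adj),
  delta (br x y) s t = act x (delta y) s t - act y (delta x) s t.
Hypothesis delta_edge : forall a (s t : basis adj), delta (bvec F (inr a)) s t = 0.
Hypothesis omega_central : forall i (s t : basis adj),
  omega i s t != 0 -> (if s is inr _ then true else false)
                      && (if t is inr _ then true else false).
Hypothesis delta_vertex : forall i (s t : basis adj),
  delta (e i) s t = \sum_a lambda i a * wedge (e i) (bvec F (inr a)) s t + omega i s t.

Lemma delta_vertex_edge i j a : delta (e i) (inl j) (inr a) = (j == i)%:R * lambda i a.
Proof.
rewrite delta_vertex.
have -> : omega i (inl j) (inr a) = 0.
  by apply/eqP; case: eqP => // /eqP /omega_central.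
rewrite addr0 /wedge /bvec.
under eq_bigr do rewrite /= mul0r subr0 mulrCA.
by rewrite -mulr_sumr sum_mul_indicator.
Qed.

Lemma delta_edge_vertex i j a : delta (e i) (inr a) (inl j) = - ((j == i)%:R * lambda i a).
Proof.
rewrite delta_vertex.
have -> : omega i (inr a) (inl j) = 0.
  by apply/eqP; case: eqP => // /eqP /omega_central; rewrite andbF.
rewrite addr0 /wedge /bvec.
under eq_bigr do rewrite /= mul0r sub0r mulrN mulrCA.
by rewrite sumrN -mulr_sumr sum_mul_indicator.
Qed.

Lemma lambda_edge_ends b g : g != b -> lambda (src b) g = - lambda (tgt b) g.
Proof.
move=> g_neq_b; have := delta_br (e (src b)) (e (tgt b)) (inr b) (inr g).
rewrite br_vertices delta_edge !act_vertex_edges !delta_vertex_edge.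
rewrite !delta_edge_vertex !eqxx src_neq_tgt (eq_sym (tgt b)) src_neq_tgt.
have same_ends : (src g == src b)%:R * (tgt g == tgt b)%:R = 0 :> F.
  by rewrite -natrM mulnb -edge_eqE (negbTE g_neq_b).
have reversed : (src g == tgt b)%:R * (tgt g == src b)%:R = 0 :> F.
  rewrite -natrM mulnb; case: andP => // -[/eqP eq_src /eqP eq_tgt].
  by case: (edge_not_reversed g b).
rewrite !mulrN !mulrA same_ends reversed (mulrC (tgt g == src b)%:R) reversed.
rewrite (mulrC (tgt g == tgt b)%:R) same_ends => eq0.
by rewrite -[LHS]subr0 eq0 /=; ring.
Qed.

End Bialgebra.
End Graph.

Theorem mainTheorem16
  (F : fieldType) (charF0 : [pchar F] =i pred0)
  (n : nat) (adj : rel 'I_n)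
  (adj_sym : symmetric adj) (adj_irr : irreflexive adj)
  (no_isolated : forall i : 'I_n, exists a : edge adj, i = src a \/ i = tgt a)
  (delta : vec F adj -> tens2 F adj)
  (Hbialg : is_lie_bialgebra delta)
  (Hz : forall (a : edge adj) b c, delta (bvec F (inr a)) b c = 0)
  (lambda : 'I_n -> edge adj -> F)
  (omega : 'I_n -> tens2 F adj)
  (omega_skew : forall i b c, omega i b c = - omega i c b)
  (omega_z : forall i (b c : basis adj),
      omega i b c != 0 -> (if b is inr _ then true else false)
                          && (if c is inr _ then true else false))
  (Hdelta : forall i b c,
      delta (bvec F (inl i)) b c =
        \sum_(a : edge adj) lambda i a * wedge (bvec F (inl i)) (bvec F (inr a)) b c
        + omega i b c)
  (i0 : 'I_n) (alpha : edge adj) (N : nat) (HN : (0 < N)%N)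
  (v : nat -> 'I_n) (beta : nat -> edge adj)
  (Hv0 : v 0%N = i0)
  (Hjoin : forall k, (k < N)%N ->
      (src (beta k) = v k /\ tgt (beta k) = v (k.+1 %% N)%N) \/
      (src (beta k) = v (k.+1 %% N)%N /\ tgt (beta k) = v k))
  (Hne : forall k, (k < N)%N -> beta k <> alpha) :
  lambda i0 alpha = (-1) ^+ N * lambda i0 alpha /\
  (odd N -> lambda i0 alpha = 0).
Proof.
case: Hbialg => _ _ _ delta_br.
have lambda_flip := lambda_edge_ends delta_br Hz omega_z Hdelta.
have sign_cycle : lambda i0 alpha = (-1) ^+ N * lambda i0 alpha.
  rewrite -Hv0; apply: (signr_cycle N (fun k => lambda (v k) alpha)) => k lt_k.
  have alpha_neq : alpha != beta k by apply/eqP => /esym; apply: Hne.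
  have := lambda_flip _ _ alpha_neq.
  by case: (Hjoin k lt_k) => -[-> ->] flip; rewrite flip ?opprK.
split=> // odd_N; apply: eq_oppr_eq0.
  by rewrite (pcharf0P _).1.
by rewrite {1}sign_cycle -signr_odd odd_N mulN1r.
Qed.
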